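(* Let $\mathcal{A},\mathcal{A}'$ be abelian categories with amplitudes $\alpha,\alpha'$, and let $F\colon\mathcal{A}\to\mathcal{A}'$ be an additive functor with $\alpha'(F(A))\le K\alpha(A)$ for all $A$, for some $K\ge0$, such that for every short exact sequence $0\to A\to B\to C\to0$ in $\mathcal{A}$: (1) if $\alpha(A)<\infty$, then $F(A)\to F(B)\to F(C)\to0$ is $\alpha'$-exact; (2) if $\alpha(C)<\infty$, then $0\to F(A)\to F(B)\to F(C)$ is $\alpha'$-exact. Then $F$ is $K$-Lipschitz with respect to the path metrics, i.e. $\mathrm{d}_{\alpha'}(F(A),F(B))\le K\,\mathrm{d}_\alpha(A,B)$ for all $A,B\in\operatorname{ob}\mathcal{A}$.
   Context: An amplitude on an abelian category $\mathcal{A}$ is a function $\alpha\colon\operatorname{ob}\mathcal{A}\to[0,\infty]$ with $\alpha(0)=0$ such that for every short exact sequence $0\to A\to B\to C\to0$, $\alpha(A)\le\alpha(B)$, $\alpha(C)\le\alpha(B)$ and $\alpha(B)\le\alpha(A)+\alpha(C)$. A sequence $\cdots\to A_k\to A_{k+1}\to\cdots$ in $\mathcal{A}'$ is $\alpha'$-exact if its homology at every position has amplitude $0$ under $\alpha'$. The path metric $\mathrm{d}_\alpha(A,B)$ is the infimum, over zigzags $A\xleftarrow{\gamma_1}C_1\xrightarrow{\gamma_2}\cdots\xrightarrow{\gamma_n}B$, of $\sum_i\alpha(\ker\gamma_i)+\alpha(\operatorname{coker}\gamma_i)$ ($\inf\emptyset=\infty$). *)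

From HB Require Import structures.
From mathcomp Require Import all_boot all_order all_algebra.
From mathcomp Require Import boolp classical_sets reals constructive_ereal ereal.
Set Implicit Arguments. Unset Strict Implicit. Unset Printing Implicit Defensive.
Import Order.TTheory GRing.Theory Num.Theory.
Local Open Scope ring_scope.

Record Cat := {
  ob :> Type;
  mor : ob -> ob -> zmodType;
  idm : forall A, mor A A;
  comp : forall A B C, mor B C -> mor A B -> mor A C;
  comp_idl : forall A B (f : mor A B), comp (idm B) f = f;
  comp_idr : forall A B (f : mor A B), comp f (idm A) = f;
  comp_assoc : forall A B C D (h : mor C D) (g : mor B C) (f : mor A B),
      comp h (comp g f) = comp (comp h g) f;
  comp_addl : forall A B C (g1 g2 : mor B C) (f : mor A B),
      comp (g1 + g2) f = comp g1 f + comp g2 f;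
  comp_addr : forall A B C (g : mor B C) (f1 f2 : mor A B),
      comp g (f1 + f2) = comp g f1 + comp g f2
}.

Arguments idm {c} A.
Arguments comp {c A B C}.

Section CatDefs.
Variable C : Cat.

Definition is_zero_obj (Z : C) : Prop := idm Z = 0.

Definition is_kernel (A B K : C) (f : mor A B) (k : mor K A) : Prop :=
  comp f k = 0 /\
  forall X (x : mor X A), comp f x = 0 ->
    exists u : mor X K, comp k u = x /\ forall v : mor X K, comp k v = x -> v = u.

Definition is_cokernel (A B Q : C) (f : mor A B) (q : mor B Q) : Prop :=
  comp q f = 0 /\
  forall X (x : mor B X), comp x f = 0 ->
    exists u : mor Q X, comp u q = x /\ forall v : mor Q X, comp v q = x -> v = u.

Definition is_mono (A B : C) (f : mor A B) : Prop :=
  forall X (x y : mor X A), comp f x = comp f y -> x = y.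
Definition is_epi (A B : C) (f : mor A B) : Prop :=
  forall X (x y : mor B X), comp x f = comp y f -> x = y.

Definition is_biproduct (A B P : C) (i1 : mor A P) (i2 : mor B P)
    (p1 : mor P A) (p2 : mor P B) : Prop :=
  [/\ comp p1 i1 = idm A, comp p2 i2 = idm B, comp p1 i2 = 0, comp p2 i1 = 0
    & comp i1 p1 + comp i2 p2 = idm P].

Definition is_abelian : Prop :=
  (exists Z : C, is_zero_obj Z) /\
  [/\ (forall A B : C, exists P (i1 : mor A P) (i2 : mor B P) p1 p2,
           is_biproduct i1 i2 p1 p2),
      (forall (A B : C) (f : mor A B), exists K (k : mor K A), is_kernel f k),
      (forall (A B : C) (f : mor A B), exists Q (q : mor B Q), is_cokernel f q),
      (forall (A B : C) (f : mor A B), is_mono f ->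
          exists D (g : mor B D), is_kernel g f)
    & (forall (A B : C) (f : mor A B), is_epi f ->
          exists D (g : mor D A), is_cokernel g f)].

Definition short_exact (A B C' : C) (f : mor A B) (g : mor B C') : Prop :=
  is_kernel g f /\ is_cokernel f g.

(* H is a homology object of A -f-> B -g-> C' at B (requires g \o f = 0):
   H = coker (A -> ker g), the map A -> ker g being the factorization of f. *)
Definition is_homology (A B C' : C) (f : mor A B) (g : mor B C') (H : C) : Prop :=
  comp g f = 0 /\
  exists K (k : mor K B) (f' : mor A K) (c : mor K H),
    [/\ is_kernel g k, comp k f' = f & is_cokernel f' c].

End CatDefs.

Section Amplitude.
Variable R : realType.
Local Open Scope ereal_scope.

Definition is_amplitude (C : Cat) (alpha : C -> \bar R) : Prop :=
  [/\ (forall A, 0 <= alpha A),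
      (forall Z : C, is_zero_obj Z -> alpha Z = 0)
    & (forall (A B D : C) (f : mor A B) (g : mor B D), short_exact f g ->
        [/\ alpha A <= alpha B, alpha D <= alpha B
          & alpha B <= alpha A + alpha D])].

Definition exact_at (C : Cat) (alpha : C -> \bar R) (A B D : C)
    (f : mor A B) (g : mor B D) : Prop :=
  exists H : C, is_homology f g H /\ alpha H = 0.
(* homology at A of 0 -> A -f-> B is ker f *)
Definition exact_left_end (C : Cat) (alpha : C -> \bar R) (A B : C)
    (f : mor A B) : Prop :=
  exists K (k : mor K A), is_kernel f k /\ alpha K = 0.
(* homology at B of A -f-> B -> 0 is coker f *)
Definition exact_right_end (C : Cat) (alpha : C -> \bar R) (A B : C)
    (f : mor A B) : Prop :=
  exists Q (q : mor B Q), is_cokernel f q /\ alpha Q = 0.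

(* zigzag_cost A B c : there is a zigzag from A to B (arrows in either
   direction) whose cost sum_i alpha(ker g_i) + alpha(coker g_i) is c *)
Inductive zigzag_cost (C : Cat) (alpha : C -> \bar R) (A : C) : C -> \bar R -> Prop :=
  | zz_nil : zigzag_cost alpha A A 0
  | zz_fwd (X Y K Q : C) (g : mor X Y) (k : mor K X) (q : mor Y Q) c :
      zigzag_cost alpha A X c -> is_kernel g k -> is_cokernel g q ->
      zigzag_cost alpha A Y (c + (alpha K + alpha Q))
  | zz_bwd (X Y K Q : C) (g : mor Y X) (k : mor K Y) (q : mor X Q) c :
      zigzag_cost alpha A X c -> is_kernel g k -> is_cokernel g q ->
      zigzag_cost alpha A Y (c + (alpha K + alpha Q)).

Definition path_metric (C : Cat) (alpha : C -> \bar R) (A B : C) : \bar R :=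
  ereal_inf [set c | zigzag_cost alpha A B c].

End Amplitude.

Record Functor (C D : Cat) := {
  fob :> C -> D;
  Fmor : forall A B : C, mor A B -> mor (fob A) (fob B);
  Fmor_id : forall A, Fmor (idm A) = idm (fob A);
  Fmor_comp : forall A B E (g : mor B E) (f : mor A B),
      Fmor (comp g f) = comp (Fmor g) (Fmor f)
}.
Arguments Fmor {C D} f {A B} : rename.

Definition is_additive (C D : Cat) (F : Functor C D) : Prop :=
  forall A B (f g : mor A B), Fmor F (f + g) = Fmor F f + Fmor F g.

(* For an arrow g with kernel Kr and cokernel Q of finite amplitude, factor g
   through its image I, giving short exact sequences 0 -> Kr -> X -> I -> 0 and
   0 -> I -> Y -> Q -> 0.  The two half-exactness hypotheses turn F(X -> I) into an
   arrow of cost at most K alpha(Kr), and F(I -> Y) into an arrow F I -> ker F(Y -> Q)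
   of cost 0 followed by a kernel inclusion of cost at most alpha'(F Q) <= K alpha(Q).
   Applying this arrow by arrow maps every zigzag from A to B onto a zigzag from F A
   to F B of at most K times its cost; arrows of infinite cost are bounded trivially. *)
From Pilot Require Import Defs.
From HB Require Import structures.
From mathcomp Require Import all_boot all_order all_algebra.
From mathcomp Require Import boolp classical_sets reals constructive_ereal ereal.
Import Order.TTheory GRing.Theory Num.Theory.
Set Implicit Arguments. Unset Strict Implicit.
Local Open Scope ring_scope.

(* Undo the shadowing of the categorical composition by [ssrfun.comp]. *)
Local Notation comp := Defs.comp.

Section Preadditive.
Variable C : Cat.

Lemma comp0l (A B D : C) (f : mor A B) : comp (0 : mor B D) f = 0.
Proof. by apply: (addrI (comp 0 f)); rewrite -comp_addl !addr0. Qed.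

Lemma comp0r (A B D : C) (g : mor B D) : comp g (0 : mor A B) = 0.
Proof. by apply: (addrI (comp g 0)); rewrite -comp_addr !addr0. Qed.

Lemma comp_subl (A B D : C) (g1 g2 : mor B D) (f : mor A B) :
  comp (g1 - g2) f = comp g1 f - comp g2 f.
Proof. by apply/eqP; rewrite eq_sym subr_eq -comp_addl subrK. Qed.

Lemma mono_eq0 (A B : C) (f : mor A B) :
  is_mono f -> forall X (x : mor X A), comp f x = 0 -> x = 0.
Proof. by move=> mf X x fx0; apply: mf; rewrite fx0 comp0r. Qed.

Lemma eq0_epi (A B : C) (f : mor A B) :
  (forall X (x : mor B X), comp x f = 0 -> x = 0) -> is_epi f.
Proof.
move=> f_eq0 X x y xy; apply/eqP; rewrite -subr_eq0; apply/eqP; apply: f_eq0.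
by rewrite comp_subl xy subrr.
Qed.

Lemma mono_comp (A B D : C) (g : mor B D) (f : mor A B) :
  is_mono g -> is_mono f -> is_mono (comp g f).
Proof. by move=> mg mf X x y; rewrite -!comp_assoc => /mg /mf. Qed.

Lemma kernel_mono (A B K : C) (f : mor A B) (k : mor K A) :
  is_kernel f k -> is_mono k.
Proof.
move=> [fk0 kH] X x y kxy.
have fkx0 : comp f (comp k x) = 0 by rewrite comp_assoc fk0 comp0l.
have [u [_ u_uniq]] := kH X _ fkx0.
by rewrite (u_uniq x erefl) (u_uniq y (esym kxy)).
Qed.

Lemma cokernel_epi (A B Q : C) (f : mor A B) (q : mor B Q) :
  is_cokernel f q -> is_epi q.
Proof.
move=> [qf0 qH] X x y xqy.
have xqf0 : comp (comp x q) f = 0 by rewrite -comp_assoc qf0 comp0r.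
have [u [_ u_uniq]] := qH X _ xqf0.
by rewrite (u_uniq x erefl) (u_uniq y (esym xqy)).
Qed.

Lemma zero_obj_mor_to (Z X : C) : is_zero_obj Z -> forall v : mor X Z, v = 0.
Proof. by move=> Z0 v; rewrite -(comp_idl v) Z0 comp0l. Qed.

Lemma mono_kernel_zero (A B Z : C) (g : mor A B) :
  is_mono g -> is_zero_obj Z -> is_kernel g (0 : mor Z A).
Proof.
move=> mg Z0; split=> [|X x gx0]; first by rewrite comp0r.
exists 0; split=> [|v _]; last exact: zero_obj_mor_to.
by rewrite comp0r (mono_eq0 mg gx0).
Qed.

Lemma zero_mor_kernel_cokernel (A B : C) :
  is_kernel (0 : mor A B) (idm A) /\ is_cokernel (0 : mor A B) (idm B).
Proof.
split; split; rewrite ?comp0l ?comp0r // => X x _; exists x.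
  by split=> [|v]; rewrite comp_idl.
by split=> [|v]; rewrite comp_idr.
Qed.

Lemma kernel_comp_mono (A B D K : C) (e : mor A B) (m : mor B D) (k : mor K A) :
  is_mono m -> is_kernel (comp m e) k -> is_kernel e k.
Proof.
move=> mm [mek0 kH]; split; first by apply: (mono_eq0 mm); rewrite comp_assoc.
by move=> X x ex0; apply: kH; rewrite -comp_assoc ex0 comp0r.
Qed.

End Preadditive.

Section Abelian.
Variable C : Cat.
Hypothesis C_abelian : is_abelian C.

Lemma epi_cokernel_of_kernel (A B K : C) (f : mor A B) (k : mor K A) :
  is_epi f -> is_kernel f k -> is_cokernel k f.
Proof.
move=> ef [fk0 kH]; split=> // X x xk0.
have [_ [_ _ _ _ epi_cokernel]] := C_abelian.
have [D [g [fg0 gH]]] := epi_cokernel _ _ f ef.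
have [u [ku _]] := kH _ g fg0.
by apply: gH; rewrite -ku comp_assoc xk0 comp0l.
Qed.

(* If t kills e, then m factors through the subobject ker t of I, so ker t = I. *)
Lemma coimage_epi (A B I Q : C) (f : mor A B) (q : mor B Q) (m : mor I B)
    (e : mor A I) :
  is_cokernel f q -> is_kernel q m -> comp m e = f -> is_epi e.
Proof.
move=> [qf0 qH] km me; have mm := kernel_mono km.
have [_ [_ has_kernel _ mono_kernel _]] := C_abelian.
apply: eq0_epi => T t te0.
have [J [j kj]] := has_kernel _ _ t; case: (kj) => tj0 jH.
have [e' [je' _]] := jH _ e te0.
have [W [h [hmj0 hH]]] := mono_kernel _ _ _ (mono_comp mm (kernel_mono kj)).
have hf0 : comp h f = 0.
  by rewrite -me -je' (comp_assoc m j e') comp_assoc hmj0 comp0l.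
have [h' [h'q _]] := qH _ h hf0.
have hm0 : comp h m = 0 by rewrite -h'q -comp_assoc (proj1 km) comp0r.
have [v [mjv _]] := hH _ m hm0.
have jv : comp j v = idm I by apply: mm; rewrite comp_idr comp_assoc.
by rewrite -(comp_idr t) -jv comp_assoc tj0 comp0l.
Qed.

Lemma image_factorization (A B Kf Q : C) (f : mor A B) (k : mor Kf A)
    (q : mor B Q) :
  is_kernel f k -> is_cokernel f q ->
  exists I (e : mor A I) (m : mor I B),
    [/\ comp m e = f, short_exact k e & short_exact m q].
Proof.
move=> kk qq.
have [_ [_ has_kernel _ _ _]] := C_abelian.
have [I [m km]] := has_kernel _ _ q.
have [e [me _]] := (proj2 km) _ f (proj1 qq).
have ke : is_kernel e k by apply: (kernel_comp_mono (kernel_mono km)); rewrite me.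
have ee := coimage_epi qq km me.
exists I, e, m; split=> //; split=> //; first exact: epi_cokernel_of_kernel.
exact: epi_cokernel_of_kernel (cokernel_epi qq) km.
Qed.

End Abelian.

Local Open Scope ereal_scope.

Definition zigzag_le (R : realType) (C : Cat) (alpha : C -> \bar R) (A B : C)
    (c : \bar R) : Prop :=
  exists2 d, zigzag_cost alpha A B d & d <= c.

Section Zigzag.
Variables (R : realType) (C : Cat) (alpha : C -> \bar R).

Lemma zigzag_cost_cat (A X Y : C) c d :
  zigzag_cost alpha A X c -> zigzag_cost alpha X Y d ->
  zigzag_cost alpha A Y (c + d).
Proof.
move=> zc; elim=> [|U V K Q g k q d' _ IH kk qq|U V K Q g k q d' _ IH kk qq].
- by rewrite adde0.
- by rewrite addeA; apply: zz_fwd kk qq.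
- by rewrite addeA; apply: zz_bwd kk qq.
Qed.

Lemma zigzag_cost_rev (A B : C) c :
  zigzag_cost alpha A B c -> zigzag_cost alpha B A c.
Proof.
elim=> [|X Y K Q g k q c' _ IH kk qq|X Y K Q g k q c' _ IH kk qq]; first exact: zz_nil.
- have := zigzag_cost_cat (zz_bwd (zz_nil _ _) kk qq) IH.
  by rewrite add0e addeC.
- have := zigzag_cost_cat (zz_fwd (zz_nil _ _) kk qq) IH.
  by rewrite add0e addeC.
Qed.

Lemma zigzag_le_arrow (X Y Kg Q : C) (g : mor X Y) (k : mor Kg X) (q : mor Y Q) c :
  is_kernel g k -> is_cokernel g q -> alpha Kg + alpha Q <= c ->
  zigzag_le alpha X Y c.
Proof.
move=> kk qq le_c; exists (0 + (alpha Kg + alpha Q)); last by rewrite add0e.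
exact: zz_fwd (zz_nil _ _) kk qq.
Qed.

Lemma zigzag_le_cat (A X Y : C) c d :
  zigzag_le alpha A X c -> zigzag_le alpha X Y d -> zigzag_le alpha A Y (c + d).
Proof.
move=> [c' zc' le_c] [d' zd' le_d]; exists (c' + d'); last exact: leeD.
exact: zigzag_cost_cat zd'.
Qed.

Lemma zigzag_le_rev (A B : C) c :
  zigzag_le alpha A B c -> zigzag_le alpha B A c.
Proof. by move=> [d zd le_c]; exists d => //; apply: zigzag_cost_rev. Qed.

Lemma path_metric_le (A B : C) c :
  zigzag_le alpha A B c -> path_metric alpha A B <= c.
Proof. by move=> [d zd le_c]; apply: le_trans le_c; apply: ereal_inf_lbound. Qed.

Hypothesis alpha_amp : is_amplitude alpha.

Lemma zigzag_cost_ge0 (A B : C) c : zigzag_cost alpha A B c -> 0 <= c.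
Proof.
have [alpha_ge0 _ _] := alpha_amp.
by elim=> // *; rewrite !adde_ge0.
Qed.

Hypothesis C_abelian : is_abelian C.

Lemma amplitude_cokernel_le (A B Q : C) (f : mor A B) (q : mor B Q) :
  is_cokernel f q -> alpha B <= alpha A + alpha Q.
Proof.
move=> qq; have [_ [_ has_kernel _ _ _]] := C_abelian.
have [Kf [k kk]] := has_kernel _ _ f.
have [I [e [m [_ sek sem]]]] := image_factorization C_abelian kk qq.
have [_ _ alpha_ses] := alpha_amp.
have [_ alpha_I _] := alpha_ses _ _ _ _ _ sek.
have [_ _ alpha_B] := alpha_ses _ _ _ _ _ sem.
by apply: le_trans alpha_B _; apply: leeD.
Qed.

(* The inclusion of a kernel is mono, and its cokernel is the image of g. *)
Lemma zigzag_le_kernel (B D Kg : C) (g : mor B D) (k : mor Kg B) :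
  is_kernel g k -> zigzag_le alpha Kg B (alpha D).
Proof.
move=> kk; have [[Z Z0] [_ _ has_cokernel _ _]] := C_abelian.
have [Q [q qq]] := has_cokernel _ _ g.
have [I [e [m [_ [_ ek] sem]]]] := image_factorization C_abelian kk qq.
have [_ alpha_Z alpha_ses] := alpha_amp.
have [alpha_I _ _] := alpha_ses _ _ _ _ _ sem.
apply: zigzag_le_arrow (mono_kernel_zero (kernel_mono kk) Z0) ek _.
by rewrite alpha_Z // add0e.
Qed.

End Zigzag.

Section FunctorLipschitz.
Variables (R : realType) (C C' : Cat) (alpha : C -> \bar R) (alpha' : C' -> \bar R)
  (F : Functor C C') (K : R).
Hypotheses (C_abelian : is_abelian C) (C'_abelian : is_abelian C')
  (alpha_amp : is_amplitude alpha) (alpha'_amp : is_amplitude alpha')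
  (F_bound : forall A : C, alpha' (F A) <= K%:E * alpha A)
  (F_right_exact : forall (A B D : C) (f : mor A B) (g : mor B D), short_exact f g ->
     alpha A < +oo ->
     exact_at alpha' (Fmor F f) (Fmor F g) /\ exact_right_end alpha' (Fmor F g))
  (F_left_exact : forall (A B D : C) (f : mor A B) (g : mor B D), short_exact f g ->
     alpha D < +oo ->
     exact_left_end alpha' (Fmor F f) /\ exact_at alpha' (Fmor F f) (Fmor F g)).

Lemma zigzag_le_F_cokernel (Kf X I : C) (k : mor Kf X) (e : mor X I) :
  short_exact k e -> alpha Kf < +oo -> zigzag_le alpha' (F X) (F I) (K%:E * alpha Kf).
Proof.
move=> sek alpha_Kf.
have [[H [[_ [L [l [f' [c [kl _ cc]]]]]] alpha'_H]] [Q [q [qq alpha'_Q]]]] :=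
  F_right_exact sek alpha_Kf.
apply: zigzag_le_arrow kl qq _; rewrite alpha'_Q adde0.
apply: le_trans (amplitude_cokernel_le alpha'_amp C'_abelian cc) _.
by rewrite alpha'_H adde0; apply: F_bound.
Qed.

(* F m factors as F I -> ker F q -> F Y; the first arrow has kernel and cokernel
   of amplitude 0 by left exactness. *)
Lemma zigzag_le_F_kernel (I Y Q : C) (m : mor I Y) (q : mor Y Q) :
  short_exact m q -> alpha Q < +oo -> zigzag_le alpha' (F I) (F Y) (K%:E * alpha Q).
Proof.
move=> smq alpha_Q.
have [[L1 [l1 [kl1 alpha'_L1]]] [H [[_ [L [l [f' [c [kl lf' cc]]]]]] alpha'_H]]] :=
  F_left_exact smq alpha_Q.
rewrite -[K%:E * _]add0e; apply: zigzag_le_cat.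
  apply: zigzag_le_arrow (kernel_comp_mono (kernel_mono kl) _) cc _.
    by rewrite lf'; apply: kl1.
  by rewrite alpha'_L1 alpha'_H adde0.
have [d zd le_d] := zigzag_le_kernel alpha'_amp C'_abelian kl.
by exists d => //; apply: le_trans le_d (F_bound _).
Qed.

Hypothesis K_gt0 : (0 < K)%R.

Lemma zigzag_le_F_arrow (X Y Kg Q : C) (g : mor X Y) (k : mor Kg X) (q : mor Y Q) :
  is_kernel g k -> is_cokernel g q ->
  zigzag_le alpha' (F X) (F Y) (K%:E * (alpha Kg + alpha Q)).
Proof.
move=> kk qq; have [alpha_ge0 _ _] := alpha_amp.
have [fin | inf] := boolP (alpha Kg + alpha Q < +oo); last first.
  move: inf; rewrite ltey negbK => /eqP ->.
  rewrite gt0_muley ?lte_fin //.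
  have [_ [_ has_kernel has_cokernel _ _]] := C'_abelian.
  have [Lg [l kl]] := has_kernel _ _ (Fmor F g).
  have [Qg [q' qq']] := has_cokernel _ _ (Fmor F g).
  exact: zigzag_le_arrow kl qq' (leey _).
have alpha_Kg : alpha Kg < +oo by apply: le_lt_trans fin; apply: leeDl.
have alpha_Q : alpha Q < +oo by apply: le_lt_trans fin; rewrite addeC leeDl.
have [I [e [m [_ sek smq]]]] := image_factorization C_abelian kk qq.
rewrite ge0_muleDr //; apply: zigzag_le_cat.
  exact: zigzag_le_F_cokernel sek alpha_Kg.
exact: zigzag_le_F_kernel smq alpha_Q.
Qed.

Lemma zigzag_le_F (A B : C) c :
  zigzag_cost alpha A B c -> zigzag_le alpha' (F A) (F B) (K%:E * c).
Proof.
have [alpha_ge0 _ _] := alpha_amp.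
elim=> [|X Y Kg Q g k q c' zc IH kk qq|X Y Kg Q g k q c' zc IH kk qq].
- by rewrite mule0; exists 0 => //; apply: zz_nil.
- rewrite ge0_muleDr ?adde_ge0 ?(zigzag_cost_ge0 alpha_amp zc) //.
  by apply: zigzag_le_cat IH _; apply: zigzag_le_F_arrow kk qq.
- rewrite ge0_muleDr ?adde_ge0 ?(zigzag_cost_ge0 alpha_amp zc) //.
  by apply: zigzag_le_cat IH _; apply/zigzag_le_rev; apply: zigzag_le_F_arrow kk qq.
Qed.

End FunctorLipschitz.

Theorem mainTheorem12 (R : realType) (C C' : Cat)
  (alpha : C -> \bar R) (alpha' : C' -> \bar R) (F : Functor C C') (K : R) :
  is_abelian C -> is_abelian C' ->
  is_amplitude alpha -> is_amplitude alpha' ->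
  is_additive F ->
  (0 <= K)%R ->
  (forall A : C, alpha' (F A) <= K%:E * alpha A) ->
  (forall (A B D : C) (f : mor A B) (g : mor B D), short_exact f g ->
     alpha A < +oo ->
     exact_at alpha' (Fmor F f) (Fmor F g) /\ exact_right_end alpha' (Fmor F g)) ->
  (forall (A B D : C) (f : mor A B) (g : mor B D), short_exact f g ->
     alpha D < +oo ->
     exact_left_end alpha' (Fmor F f) /\ exact_at alpha' (Fmor F f) (Fmor F g)) ->
  forall A B : C,
    path_metric alpha' (F A) (F B) <= K%:E * path_metric alpha A B.
Proof.
move=> C_ab C'_ab amp amp' _ K_ge0 F_bound F_right F_left A B.
move: K_ge0; rewrite le_eqVlt => /predU1P [K0 | K_gt0].
  have [kk qq] := zero_mor_kernel_cokernel (F A) (F B).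
  rewrite -K0 mul0e; apply: path_metric_le; apply: zigzag_le_arrow kk qq _.
  by rewrite -(adde0 0) leeD // (le_trans (F_bound _)) // -K0 mul0e.
rewrite /path_metric -ereal_inf_pZl //; apply/ereal_infP => _ [c zc <-].
exact: path_metric_le (zigzag_le_F C_ab C'_ab amp amp' F_bound F_right F_left K_gt0 zc).
Qed.
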